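(* Let $H\in\mathbb{R}^{n\times d}$ have rank $h$, $\Sigma\in\mathbb{R}^{n\times n}$ symmetric positive definite, $\Gamma_0$ the empirical covariance of an initial ensemble, $C_0=H\Gamma_0H^\top$, $C_{i+1}=\Sigma-\Sigma(C_i+\Sigma)^{-1}\Sigma$, and $\widetilde{\mathcal{M}}_i=\Sigma(C_i+\Sigma)^{-1}$. With $\widetilde{\mathcal{P}},\widetilde{\mathcal{Q}},\widetilde{\mathcal{N}}$ as in the context, for every $i\ge0$ these are complementary spectral projectors of $\widetilde{\mathcal{M}}_i$: each commutes with $\widetilde{\mathcal{M}}_i$ and is idempotent, their pairwise products are zero, and $\widetilde{\mathcal{P}}+\widetilde{\mathcal{Q}}+\widetilde{\mathcal{N}}=I_n$.
   Context: Let $r$ be the number of positive eigenvalues of $C_0\tilde w=\tilde\delta\Sigma\tilde w$. Let $\tilde w_1,\dots,\tilde w_n$ be a basis of $\mathbb{R}^n$ with $\tilde w_k^\top\Sigma\tilde w_l$ equal to $1$ if $k=l$, $0$ otherwise, each a generalized eigenvector of $(C_i,\Sigma)$ for every $i\ge0$, with $\tilde w_1,\dots,\tilde w_r\in\mathsf{Ran}(\Sigma^{-1}H)$ having positive eigenvalues, $\tilde w_{r+1},\dots,\tilde w_h\in\mathsf{Ran}(\Sigma^{-1}H)$ eigenvalue zero, $\tilde w_{h+1},\dots,\tilde w_n\in\mathsf{Ker}(H^\top)$ eigenvalue zero. With $\widetilde W=[\tilde w_1,\dots,\tilde w_n]$ and $\widetilde W_{k:l}$ its columns $k$ through $l$: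 $\widetilde{\mathcal{P}}=\Sigma\widetilde W_{1:r}\widetilde W_{1:r}^\top$, $\widetilde{\mathcal{Q}}=\Sigma\widetilde W_{r+1:h}\widetilde W_{r+1:h}^\top$, $\widetilde{\mathcal{N}}=\Sigma\widetilde W_{h+1:n}\widetilde W_{h+1:n}^\top$. Empirical covariance: $\Gamma_0=\frac1{J-1}\sum_j(v_0^{(j)}-\bar v_0)(v_0^{(j)}-\bar v_0)^\top$. *)

From mathcomp Require Import all_boot all_order all_algebra.
Set Implicit Arguments. Unset Strict Implicit. Unset Printing Implicit Defensive.
Import Order.TTheory GRing.Theory Num.Theory.
Local Open Scope ring_scope.

Section Defs.
Variable R : realFieldType.

Definition spd n (S : 'M[R]_n) : Prop :=
  S^T = S /\ forall x : 'cV[R]_n, x != 0 -> 0 < (x^T *m S *m x) 0 0.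

Definition ens_mean d J (v : 'I_J -> 'cV[R]_d) : 'cV[R]_d :=
  J%:R^-1 *: \sum_(j < J) v j.

Definition emp_cov d J (v : 'I_J -> 'cV[R]_d) : 'M[R]_d :=
  (J.-1)%:R^-1 *: \sum_(j < J) ((v j - ens_mean v) *m (v j - ens_mean v)^T).

Fixpoint Cseq n (S C0 : 'M[R]_n) (i : nat) : 'M[R]_n :=
  match i with
  | 0 => C0
  | i.+1 => S - S *m invmx (Cseq S C0 i + S) *m S
  end.

Definition Mseq n (S C0 : 'M[R]_n) (i : nat) : 'M[R]_n :=
  S *m invmx (Cseq S C0 i + S).

(* W_{k:l} W_{k:l}^T for the (0-indexed) column range k <= j < l of W,
   written as the sum of outer products of those columns. *)
Definition colblock_outer n (W : 'M[R]_n) (k l : nat) : 'M[R]_n :=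
  \sum_(j < n | (k <= j < l)%N) (col j W *m (col j W)^T).

Definition proj_blk n (S W : 'M[R]_n) (k l : nat) : 'M[R]_n :=
  S *m colblock_outer W k l.

End Defs.

From mathcomp Require Import all_boot all_order all_algebra.
From mathcomp Require Import zify lra.
Set Implicit Arguments. Unset Strict Implicit.
Import Order.TTheory GRing.Theory Num.Theory.
Local Open Scope ring_scope.

(* Since W^T S W = I, the map f |-> S W diag(f) W^T is a unital ring morphism
   from functions on the index set (with pointwise operations) to matrices.
   C_0 = S W diag(delta) W^T S with delta >= 0 (delta_k = w_k^T C_0 w_k and
   C_0 is positive semidefinite), and the Riccati step maps this form to itself
   with delta |-> delta / (1 + delta), so every M_i = S W diag(1/(1+delta_i)) W^T.
   The projectors are the images of the indicators of three complementary
   index blocks, hence commute with M_i and satisfy the projector identities. *)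

Lemma emp_cov_congr_psd (R : realFieldType) n d J (H : 'M[R]_(n, d))
    (v : 'I_J -> 'cV[R]_d) (x : 'cV[R]_n) :
  0 <= (x^T *m (H *m emp_cov v *m H^T) *m x) 0 0.
Proof.
have -> : x^T *m (H *m emp_cov v *m H^T) *m x
    = (H^T *m x)^T *m emp_cov v *m (H^T *m x).
  by rewrite trmx_mul trmxK !mulmxA.
move: (H^T *m x) => y.
rewrite /emp_cov -scalemxAr -scalemxAl mxE mulr_ge0 ?invr_ge0 ?ler0n //.
rewrite mulmx_sumr mulmx_suml summxE sumr_ge0 // => j _.
set u := v j - ens_mean v.
have -> : y^T *m (u *m u^T) *m y = (y^T *m u) *m (y^T *m u)^T.
  by rewrite trmx_mul trmxK !mulmxA.
rewrite mxE sumr_ge0 // => l _; rewrite !mxE -expr2 sqr_ge0 //.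
Qed.

Lemma col_mulmx (R : ringType) m n p (A : 'M[R]_(m, n)) (B : 'M[R]_(n, p)) j :
  col j (A *m B) = A *m col j B.
Proof. by rewrite !colE mulmxA. Qed.

Section SpectralCalculus.
Variables (R : realFieldType) (n : nat) (S W : 'M[R]_n).
Hypothesis WtSW : W^T *m S *m W = 1%:M.

Lemma mulmx_WWtS : W *m W^T *m S = 1%:M.
Proof. by rewrite -mulmxA; apply: mulmx1C. Qed.

Lemma mulmx_SWWt : S *m (W *m W^T) = 1%:M.
Proof. exact: mulmx1C mulmx_WWtS. Qed.

Definition spec_mx (f : 'I_n -> R) : 'M[R]_n :=
  S *m W *m diag_mx (\row_j f j) *m W^T.

Lemma eq_spec_mx f g : f =1 g -> spec_mx f = spec_mx g.
Proof.
by move=> fg; congr (_ *m diag_mx _ *m _); apply/rowP => j; rewrite !mxE.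
Qed.

Lemma spec_mxM f g : spec_mx f *m spec_mx g = spec_mx (fun j => f j * g j).
Proof.
have -> : spec_mx f *m spec_mx g
    = S *m W *m diag_mx (\row_j f j) *m (W^T *m S *m W)
        *m diag_mx (\row_j g j) *m W^T by rewrite /spec_mx !mulmxA.
rewrite WtSW mulmx1 -[_ *m diag_mx (\row_j g j)]mulmxA mulmx_diag /spec_mx.
by congr (_ *m diag_mx _ *m _); apply/rowP => j; rewrite !mxE.
Qed.

Lemma spec_mxC f g : spec_mx f *m spec_mx g = spec_mx g *m spec_mx f.
Proof. by rewrite !spec_mxM; apply: eq_spec_mx => j; rewrite mulrC. Qed.

Lemma spec_mx1 : spec_mx (fun=> 1) = 1%:M.
Proof.
rewrite /spec_mx (_ : \row_j 1 = const_mx 1); last by apply/rowP => j; rewrite !mxE.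
by rewrite diag_const_mx mulmx1 -mulmxA mulmx_SWWt.
Qed.

Lemma spec_mx0 : spec_mx (fun=> 0) = 0.
Proof.
rewrite /spec_mx (_ : \row_j 0 = 0); last by apply/rowP => j; rewrite !mxE.
by rewrite raddf0 mulmx0 mul0mx.
Qed.

Lemma spec_mxD f g : spec_mx (fun j => f j + g j) = spec_mx f + spec_mx g.
Proof.
rewrite /spec_mx -mulmxDl -mulmxDr -raddfD /=.
by congr (_ *m diag_mx _ *m _); apply/rowP => j; rewrite !mxE.
Qed.

Lemma spec_mxB f g : spec_mx (fun j => f j - g j) = spec_mx f - spec_mx g.
Proof.
rewrite /spec_mx -mulmxBl -mulmxBr -raddfB /=.
by congr (_ *m diag_mx _ *m _); apply/rowP => j; rewrite !mxE.
Qed.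

Lemma mulmx_spec_mxV f : (forall j, f j != 0) ->
  spec_mx f *m spec_mx (fun j => (f j)^-1) = 1%:M.
Proof.
by move=> f_neq0; rewrite spec_mxM -spec_mx1; apply: eq_spec_mx => j; rewrite mulfV.
Qed.

Lemma mulmx_invmx_spec_mxS f : (forall j, f j != 0) ->
  S *m invmx (spec_mx f *m S) = spec_mx (fun j => (f j)^-1).
Proof.
move=> f_neq0; set Finv := spec_mx (fun j => (f j)^-1).
have FS_unit : spec_mx f *m S \in unitmx.
  apply: (proj1 (mulmx1_unit (B := W *m W^T *m Finv) _)).
  by rewrite mulmxA -(mulmxA _ S) mulmx_SWWt mulmx1 mulmx_spec_mxV.
have S_eq : S = Finv *m (spec_mx f *m S).
  by rewrite mulmxA spec_mxC mulmx_spec_mxV // mul1mx.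
by rewrite {1}S_eq -mulmxA mulmxV // mulmx1.
Qed.

Lemma eigenbasis_spec_mx (C : 'M[R]_n) f :
    (forall k, C *m col k W = f k *: (S *m col k W)) ->
  C = spec_mx f *m S.
Proof.
move=> eigC; have CW : C *m W = S *m W *m diag_mx (\row_j f j).
  apply/matrixP => a b; rewrite mul_mx_diag mxE.
  have := congr1 (fun x : 'cV[R]_n => x a 0) (eigC b).
  by rewrite -!col_mulmx !mxE => ->; rewrite mulrC.
by rewrite -[C]mulmx1 -mulmx_WWtS !mulmxA CW.
Qed.

Lemma eigenvalue_quad (C : 'M[R]_n) k (delta : R) :
    C *m col k W = delta *: (S *m col k W) ->
  delta = ((col k W)^T *m C *m col k W) 0 0.
Proof.
move=> eigC; rewrite -mulmxA eigC -scalemxAr mulmxA mxE.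
have -> : ((col k W)^T *m S *m col k W) 0 0 = (W^T *m S *m W) k k.
  by rewrite tr_col -row_mul -col_mulmx -row_mul !mxE.
by rewrite WtSW mxE eqxx mulr1.
Qed.

Lemma spec_mxS_addS f :
  spec_mx f *m S + S = spec_mx (fun j => f j + 1) *m S.
Proof. by rewrite spec_mxD spec_mx1 mulmxDl mul1mx. Qed.

Lemma Cseq_spec (C0 : 'M[R]_n) f :
    C0 = spec_mx f *m S -> (forall j, 0 <= f j) ->
  forall i, exists2 g, (forall j, 0 <= g j) & Cseq S C0 i = spec_mx g *m S.
Proof.
move=> C0E f_ge0; elim=> [|i [g g_ge0 CiE]]; first by exists f.
have g1_neq0 j : g j + 1 != 0 by apply: lt0r_neq0; have := g_ge0 j; lra.
exists (fun j => 1 - (g j + 1)^-1) => [j|/=].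
  by rewrite subr_ge0 invf_le1; have := g_ge0 j; lra.
rewrite CiE spec_mxS_addS mulmx_invmx_spec_mxS // spec_mxB spec_mx1 mulmxBl mul1mx.
by congr (_ - _ *m _); apply: eq_spec_mx.
Qed.

Lemma Mseq_spec (C0 : 'M[R]_n) f :
    C0 = spec_mx f *m S -> (forall j, 0 <= f j) ->
  forall i, exists g, Mseq S C0 i = spec_mx g.
Proof.
move=> C0E f_ge0 i; have [g g_ge0 CiE] := Cseq_spec C0E f_ge0 i.
exists (fun j => (g j + 1)^-1); rewrite /Mseq CiE spec_mxS_addS.
rewrite mulmx_invmx_spec_mxS // => j.
by apply: lt0r_neq0; have := g_ge0 j; lra.
Qed.

Definition block_ind (k l : nat) (j : 'I_n) : R := (k <= j < l)%N%:R.

Lemma proj_blk_spec k l : proj_blk S W k l = spec_mx (block_ind k l).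
Proof.
rewrite /proj_blk /spec_mx -!mulmxA; congr (S *m _).
apply/matrixP => a b; rewrite /colblock_outer summxE mulmxA mul_mx_diag mxE.
rewrite big_mkcond; apply: eq_bigr => j _; rewrite !mxE /block_ind.
by case: ifP => _; rewrite ?mulr1 ?mulr0 ?mul0r // big_ord1 !mxE.
Qed.

Lemma block_ind_idem k l :
  spec_mx (block_ind k l) *m spec_mx (block_ind k l) = spec_mx (block_ind k l).
Proof.
by rewrite spec_mxM; apply: eq_spec_mx => j; rewrite /block_ind; case: (_ && _);
  rewrite ?mulr1 ?mulr0.
Qed.

Lemma block_ind_orth k l k' l' : (l <= k')%N ->
  spec_mx (block_ind k l) *m spec_mx (block_ind k' l') = 0 /\
  spec_mx (block_ind k' l') *m spec_mx (block_ind k l) = 0.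
Proof.
move=> lk'; suff orth : spec_mx (block_ind k l) *m spec_mx (block_ind k' l') = 0.
  by split; last rewrite spec_mxC.
rewrite spec_mxM -spec_mx0; apply: eq_spec_mx => j.
rewrite /block_ind; case: (boolP (k <= j < l)%N) => [jkl|]; last by rewrite mul0r.
by rewrite (_ : (k' <= j < l')%N = false) ?mulr0 //; lia.
Qed.

Lemma block_ind_partition r h : (r <= h)%N ->
  spec_mx (block_ind 0 r) + spec_mx (block_ind r h) + spec_mx (block_ind h n)
  = 1%:M.
Proof.
move=> rh; rewrite -!spec_mxD -spec_mx1; apply: eq_spec_mx => j.
have := ltn_ord j; rewrite /block_ind.
case: (0 <= j < r)%N / idP; case: (r <= j < h)%N / idP; case: (h <= j < n)%N / idP;
  rewrite ?addr0 ?add0r //; lia.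
Qed.

End SpectralCalculus.

Theorem proposition4p4 (R : realFieldType) (n d J h r : nat)
  (H : 'M[R]_(n, d)) (S : 'M[R]_n) (v : 'I_J -> 'cV[R]_d) (W : 'M[R]_n) :
  (1 < J)%N ->
  \rank H = h ->
  spd S ->
  (r <= h)%N ->
  let C0 := H *m emp_cov v *m H^T in
  (* W = [w_1, ..., w_n] is a basis, Sigma-orthonormal *)
  W \in unitmx ->
  W^T *m S *m W = 1%:M ->
  (* each w_k is a generalized eigenvector of (C_i, Sigma) for every i *)
  (forall (i : nat) (k : 'I_n), exists delta : R,
      Cseq S C0 i *m col k W = delta *: (S *m col k W)) ->
  (* w_1..w_r: in Ran(Sigma^{-1} H), positive eigenvalue for C_0 *)
  (forall k : 'I_n, (k < r)%N ->
      (exists x : 'cV[R]_d, col k W = invmx S *m H *m x) /\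
      (exists delta : R, 0 < delta /\ C0 *m col k W = delta *: (S *m col k W))) ->
  (* w_{r+1}..w_h: in Ran(Sigma^{-1} H), eigenvalue zero *)
  (forall k : 'I_n, (r <= k < h)%N ->
      (exists x : 'cV[R]_d, col k W = invmx S *m H *m x) /\
      C0 *m col k W = 0) ->
  (* w_{h+1}..w_n: in Ker(H^T), eigenvalue zero *)
  (forall k : 'I_n, (h <= k)%N ->
      H^T *m col k W = 0 /\ C0 *m col k W = 0) ->
  let P := proj_blk S W 0 r in
  let Q := proj_blk S W r h in
  let N := proj_blk S W h n in
  forall i : nat,
    let M := Mseq S C0 i in
    [/\ P *m M = M *m P, Q *m M = M *m Q & N *m M = M *m N] /\
    [/\ P *m P = P, Q *m Q = Q & N *m N = N] /\
    [/\ P *m Q = 0, Q *m P = 0, P *m N = 0 & N *m P = 0] /\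
    [/\ Q *m N = 0, N *m Q = 0 & P + Q + N = 1%:M].
Proof.
move=> _ _ _ rh C0 _ WtSW eig _ _ _ P Q N i; rewrite /=.
have [delta C0_eig] := fin_all_exists (eig 0%N).
have delta_ge0 k : 0 <= delta k.
  by rewrite (eigenvalue_quad WtSW (C0_eig k)) emp_cov_congr_psd.
have C0E : C0 = spec_mx S W delta *m S := eigenbasis_spec_mx WtSW C0_eig.
have [g ->] := Mseq_spec WtSW C0E delta_ge0 i.
rewrite /P /Q /N !proj_blk_spec.
have [PQ QP] := block_ind_orth WtSW 0 h (leqnn r).
have [PN NP] := block_ind_orth WtSW 0 n rh.
have [QN NQ] := block_ind_orth WtSW r n (leqnn h).
split; first by split; apply: spec_mxC.
split; first by split; apply: block_ind_idem.
by do 2 split=> //; apply: block_ind_partition.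
Qed.
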